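(* Let $\Gamma\in\mathcal S$ with embedding $\varphi$ into $\mathbb Z^n$, and let $v_{i_1},\dots,v_{i_k}$ be vertices of $\Gamma$ spanning a connected subtree. Then $w=\sum_{j=1}^k\varphi(v_{i_j})$ is of the form $E_a-\sum_{j\in J}E_j$ or $-2E_a-\sum_{j\in J}E_j$ for some index $a$ and subset $J\subset\{1,\dots,n\}$ with $a\notin J$.
   Context: A plumbing tree is a finite tree $\Gamma$ each of whose vertices $v$ carries an integer decoration $d(v)$. $\Gamma$ is minimal if no vertex has decoration $-1$. For $n\ge 1$ let $(\mathbb Z^n,Q_n)$ be the lattice with basis $E_1,\dots,E_n$ and $Q_n(E_i,E_j)=-\delta_{ij}$, and let $K=\sum_{i=1}^n E_i$. A plumbing tree $\Gamma$ on $n$ vertices is a symplectic plumbing tree if there is a map $\varphi$ (an embedding) from its vertex set to $\mathbb Z^n$ such that: for distinct vertices $v_1,v_2$, $Q_n(\varphi(v_1),\varphi(v_2))$ is $1$ if they are adjacent and $0$ otherwise; $Q_n(\varphi(v),\varphi(v))=d(v)$ for every $v$; and $Q_n(\varphi(v),K)+Q_n(\varphi(v),\varphi(v))=-2$ for every $v$. $\mathcal S$ is the set of minimal, connected symplectic plumbing trees. *)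

From mathcomp Require Import all_boot all_order all_algebra.
Set Implicit Arguments. Unset Strict Implicit. Unset Printing Implicit Defensive.
Import Order.TTheory GRing.Theory Num.Theory.
Local Open Scope ring_scope.

Definition vecZ (n : nat) := 'I_n -> int.

Definition Qn (n : nat) (x y : vecZ n) : int := - \sum_(i < n) x i * y i.

Definition Evec (n : nat) (a : 'I_n) : vecZ n := fun i => (i == a)%:Z.

Definition Kvec (n : nat) : vecZ n := fun _ => 1.

Definition simple_graph (n : nat) (e : rel 'I_n) : Prop :=
  symmetric e /\ irreflexive e.

Definition is_tree (n : nat) (e : rel 'I_n) : Prop :=
  [/\ simple_graph e,
      (forall u v : 'I_n, connect e u v) &
      (forall c : seq 'I_n, uniq c -> (3 <= size c)%N -> ~~ cycle e c)].

(* Plumbing tree: a tree with integer decorations d. *)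
Definition minimal (n : nat) (d : 'I_n -> int) : Prop :=
  forall v, d v != -1.

Definition symplectic_embedding (n : nat) (e : rel 'I_n) (d : 'I_n -> int)
  (phi : 'I_n -> vecZ n) : Prop :=
  [/\ (forall v1 v2 : 'I_n, v1 != v2 ->
         Qn (phi v1) (phi v2) = (if e v1 v2 then 1 else 0)),
      (forall v, Qn (phi v) (phi v) = d v) &
      (forall v, Qn (phi v) (@Kvec n) + Qn (phi v) (phi v) = -2)].

Definition spans_connected_subtree (n : nat) (e : rel 'I_n) (S : {set 'I_n}) : Prop :=
  S != set0 /\
  forall u v, u \in S -> v \in S ->
    connect [rel x y | [&& e x y, x \in S & y \in S]] u v.

(** Put [adj x := \sum_i x_i (x_i + 1) = - (Q(x, K) + Q(x, x))].  The adjunction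
    condition on the embedding says [adj (phi v) = 2] for every vertex, and since
    [t (t + 1)] is [0] for [t = 0, -1], [2] for [t = 1, -2] and at least [6]
    otherwise, the integer vectors with [adj w = 2] are exactly
    [E_a - \sum_J E_j] and [-2 E_a - \sum_J E_j].  A connected subtree is built up
    one vertex at a time; because the tree has no cycles, each new vertex [v] is
    adjacent to exactly one vertex already present, so [Q(w, phi v) = 1] and
    [adj (w + phi v) = adj w + adj (phi v) - 2 Q(w, phi v) = 2] again. *)
From mathcomp Require Import all_boot all_order all_algebra zify.
Import Order.TTheory GRing.Theory Num.Theory.
Set Implicit Arguments. Unset Strict Implicit. Unset Printing Implicit Defensive.
Local Open Scope ring_scope.

Definition pronic (t : int) : int := t * (t + 1).

Lemma pronic_cases t : t = -2 \/ t = -1 \/ t = 0 \/ t = 1 \/ 6 <= pronic t.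
Proof.
rewrite /pronic; have [|[|]] : t <= -3 \/ (-2 <= t <= 1) \/ 2 <= t by lia.
- by move=> ?; do 4 right; nia.
- by move=> ?; lia.
- by move=> ?; do 4 right; nia.
Qed.

Lemma pronic_ge0 t : 0 <= pronic t.
Proof. by case: (pronic_cases t) => [->|[->|[->|[->|]]]]; rewrite /pronic; lia.
Qed.

Lemma pronic_gt0 t : 0 < pronic t -> 2 <= pronic t.
Proof. by case: (pronic_cases t) => [->|[->|[->|[->|]]]]; rewrite /pronic; lia.
Qed.

Lemma pronic_eq0 t : pronic t = 0 -> t = 0 \/ t = -1.
Proof. by case: (pronic_cases t) => [->|[->|[->|[->|]]]]; rewrite /pronic; lia.
Qed.

Lemma pronic_eq2 t : pronic t = 2 -> t = 1 \/ t = -2.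
Proof. by case: (pronic_cases t) => [->|[->|[->|[->|]]]]; rewrite /pronic; lia.
Qed.

Definition adj n (x : vecZ n) : int := \sum_(i < n) pronic (x i).

Lemma eq_adj n (x y : vecZ n) : x =1 y -> adj x = adj y.
Proof. by move=> xy; apply: eq_bigr => i _; rewrite xy. Qed.

Lemma adjE n (x : vecZ n) : adj x = - (Qn x (@Kvec n) + Qn x x).
Proof.
rewrite /Qn /Kvec -opprD opprK -big_split /=.
by apply: eq_bigr => i _; rewrite /pronic; lia.
Qed.

Lemma adjD n (x y : vecZ n) :
  adj (fun i => x i + y i) = adj x + adj y - 2 * Qn x y.
Proof.
rewrite /adj /Qn mulrN opprK mulr_sumr -!big_split /=.
by apply: eq_bigr => i _; rewrite /pronic; lia.
Qed.

Lemma sum_Evec n (J : {set 'I_n}) i : \sum_(j in J) Evec j i = (i \in J)%:Z.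
Proof.
rewrite (eq_bigr (fun j => (j == i)%:Z)) => [|j _]; last by rewrite /Evec eq_sym.
have [iJ|iNJ] := boolP (i \in J).
  by rewrite (bigD1 i) //= eqxx big1 ?addr0 // => j /andP[_ /negbTE->].
by rewrite big1 // => j jJ; case: eqP jJ iNJ => // ->->.
Qed.

Lemma adj_eq2 n (w : vecZ n) : adj w = 2 ->
  exists (a : 'I_n) (J : {set 'I_n}),
    a \notin J /\
    ((forall i, w i = Evec a i - \sum_(j in J) Evec j i) \/
     (forall i, w i = - 2 * Evec a i - \sum_(j in J) Evec j i)).
Proof.
move=> adj2.
have [a wa_gt0] : exists a, 0 < pronic (w a).
  case: (pickP (fun i => 0 < pronic (w i))) => [a ?|none]; first by exists a.
  move: adj2; rewrite /adj big1 // => i _.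
  by apply/eqP; rewrite eq_le pronic_ge0 leNgt none.
have := adj2; rewrite /adj (bigD1 a) //=; set rest := (X in _ + X) => splitE.
have rest_ge0 : 0 <= rest by apply: sumr_ge0 => i _; apply: pronic_ge0.
have wa2 : pronic (w a) = 2 by have := pronic_gt0 wa_gt0; lia.
have rest0 i : i != a -> pronic (w i) = 0.
  have sum0 : rest = 0 by lia.
  by move=> ia; apply: (psumr_eq0P _ sum0) => // j _; apply: pronic_ge0.
exists a, [set i | w i == -1]; split.
  by rewrite inE; case: (pronic_eq2 wa2) => ->.
have wJ i : i != a -> w i = - (i \in [set i | w i == -1])%:Z.
  by move=> ia; rewrite inE; case: (pronic_eq0 (rest0 i ia)) => ->.
have Ea i : Evec a i = (i == a)%:Z by [].
case: (pronic_eq2 wa2) => wa; [left | right] => i; rewrite sum_Evec Ea;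
  have [->|ia] := eqVneq i a; by [rewrite wa inE wa | rewrite wJ // ?mulr0 sub0r].
Qed.

Lemma path_in (T : eqType) (r : rel T) (A : pred T) x p :
  (forall u v, r u v -> v \in A) -> path r x p -> all (mem A) p.
Proof.
move=> rA; elim: p x => [|y p IH] x //= /andP[rxy pyp].
by rewrite (rA _ _ rxy) (IH y).
Qed.

Lemma connect_exit (T : finType) (r : rel T) (A : pred T) x y :
  connect r x y -> x \in A -> y \notin A ->
  exists u v, [/\ u \in A, v \notin A & r u v].
Proof.
move=> /connectP[p + ->]; elim: p x => [|z p IH] x /=; first by move=> _ ->.
move=> /andP[rxz pzp] xA; have [zA|zNA] := boolP (z \in A).
  exact: IH.
by exists x, z.
Qed.

Section Subtrees.

Variables (n : nat) (e : rel 'I_n).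

Definition induced (T : {set 'I_n}) : rel 'I_n :=
  [rel x y | [&& e x y, x \in T & y \in T]].

Definition connected_in (T : {set 'I_n}) : Prop :=
  forall u v, u \in T -> v \in T -> connect (induced T) u v.

Lemma connected_in_set1 x : connected_in [set x].
Proof. by move=> u v; rewrite !inE => /eqP-> /eqP->; apply: connect0. Qed.

Lemma connected_in_setU1 (T : {set 'I_n}) u v : symmetric e ->
  connected_in T -> u \in T -> e u v -> connected_in (v |: T).
Proof.
move=> esym connT uT euv.
have induced_sub : subrel (induced T) (induced (v |: T)).
  by move=> x y /and3P[exy xT yT]; rewrite /induced /= exy !inE xT yT !orbT.
have lift : subrel (connect (induced T)) (connect (induced (v |: T))).
  by apply: connect_sub => x y /induced_sub/connect1.
have uv : induced (v |: T) u v by rewrite /induced /= euv !inE uT eqxx !orbT.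
have vu : induced (v |: T) v u by rewrite /induced /= esym euv !inE uT eqxx !orbT.
move=> x y; rewrite !inE => /orP[/eqP->|xT] /orP[/eqP->|yT].
- exact: connect0.
- exact: connect_trans (connect1 vu) (lift _ _ (connT u y uT yT)).
- exact: connect_trans (lift _ _ (connT x u xT uT)) (connect1 uv).
- exact: lift (connT x y xT yT).
Qed.

Lemma connected_in_grow (S T : {set 'I_n}) :
  connected_in S -> T \subset S -> T != set0 -> T != S ->
  exists u v, [/\ u \in T, v \in S, v \notin T & e u v].
Proof.
move=> connS TS /set0Pn[x xT] TneS.
have /subsetPn[y yS yNT] : ~~ (S \subset T).
  by apply: contra TneS => ST; rewrite eqEsubset TS.
have [u [v [uT vNT /and3P[euv _ vS]]]] :=
  connect_exit (connS x y (subsetP TS x xT) yS) xT yNT.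
by exists u, v.
Qed.

Hypothesis tree : is_tree e.

(* Two neighbours of [v] in [T] would close up, through a path inside [T],
   into a cycle. *)
Lemma tree_nbr_unique (T : {set 'I_n}) v u1 u2 :
  connected_in T -> v \notin T -> e v u1 -> e v u2 -> u1 \in T -> u2 \in T ->
  u1 = u2.
Proof.
case: tree => [[esym _] _ acyclic] connT vNT vu1 vu2 u1T u2T.
apply/eqP/negPn/negP => u1Nu2.
case/connectP: (connT _ _ u1T u2T) => p pathp; case/shortenP: pathp.
move=> q pathq uniqq _ u2E.
have qT : all (mem T) q by apply: path_in pathq => ? ? /and3P[].
have size_c : (3 <= size [:: v, u1 & q])%N.
  by case: q u2E {pathq uniqq qT} => [/= u2E|//]; rewrite u2E eqxx in u1Nu2.
have uniq_c : uniq [:: v, u1 & q].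
  rewrite cons_uniq uniqq andbT inE negb_or; apply/andP; split.
    by apply: contraNneq vNT => ->.
  by apply: contra vNT => /(allP qT).
move/negP: (acyclic _ uniq_c size_c); apply.
rewrite /cycle /= vu1 rcons_path -u2E esym vu2 andbT.
by apply: sub_path pathq => ? ? /and3P[].
Qed.

End Subtrees.

Definition vsum n (phi : 'I_n -> vecZ n) (T : {set 'I_n}) : vecZ n :=
  fun i => \sum_(u in T) phi u i.

Lemma vsum_setU1 n (phi : 'I_n -> vecZ n) (T : {set 'I_n}) v : v \notin T ->
  vsum phi (v |: T) =1 (fun i => vsum phi T i + phi v i).
Proof. by move=> vNT i; rewrite /vsum big_setU1 // addrC. Qed.

Lemma Qn_vsuml n (phi : 'I_n -> vecZ n) (T : {set 'I_n}) y :
  Qn (vsum phi T) y = \sum_(u in T) Qn (phi u) y.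
Proof.
rewrite /Qn /vsum sumrN; congr (- _).
rewrite (eq_bigr (fun i => \sum_(u in T) phi u i * y i)) => [|i _].
  exact: exchange_big.
by rewrite mulr_suml.
Qed.

Section Embedding.

Variables (n : nat) (e : rel 'I_n) (d : 'I_n -> int) (phi : 'I_n -> vecZ n).
Hypotheses (tree : is_tree e) (emb : symplectic_embedding e d phi).

Lemma adj_phi v : adj (phi v) = 2.
Proof. by case: emb => _ _ adjunction; rewrite adjE adjunction. Qed.

Lemma Qn_vsum_leaf (T : {set 'I_n}) u v :
  connected_in e T -> u \in T -> v \notin T -> e u v ->
  Qn (vsum phi T) (phi v) = 1.
Proof.
move=> connT uT vNT euv; case: emb => Qphi _ _.
have esym : symmetric e by case: tree => [[]].
have neqv w : w \in T -> w != v by apply: contraTneq => ->.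
rewrite Qn_vsuml (bigD1 u) //= Qphi ?neqv // euv big1 ?addr0 //.
move=> w /andP[wT wu].
rewrite Qphi ?neqv //; case: ifP => // ewv.
have := tree_nbr_unique tree connT vNT (etrans (esym v u) euv)
                        (etrans (esym v w) ewv) uT wT.
by move=> uw; rewrite uw eqxx in wu.
Qed.

Lemma adj_vsum_leaf (T : {set 'I_n}) u v :
  connected_in e T -> u \in T -> v \notin T -> e u v ->
  adj (vsum phi T) = 2 -> adj (vsum phi (v |: T)) = 2.
Proof.
move=> connT uT vNT euv adjT.
by rewrite (eq_adj (vsum_setU1 phi vNT)) adjD adj_phi adjT
  (Qn_vsum_leaf connT uT vNT euv).
Qed.

Lemma adj_vsum_connected (S : {set 'I_n}) : connected_in e S -> S != set0 ->
  adj (vsum phi S) = 2.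
Proof.
move=> connS /set0Pn[x xS].
have esym : symmetric e by case: tree => [[]].
suff grow m (T : {set 'I_n}) :
    (#|S| - #|T| <= m)%N -> T \subset S -> T != set0 -> connected_in e T ->
    adj (vsum phi T) = 2 -> adj (vsum phi S) = 2.
  apply: (grow #|S| [set x]); rewrite ?leq_subr ?sub1set //.
  - by apply/set0Pn; exists x; rewrite set11.
  - exact: connected_in_set1.
  - by rewrite -(adj_phi x); apply: eq_adj => i; rewrite /vsum big_set1.
elim: m T => [|m IH] T sizeT TS T0 connT adjT.
  suff -> : S = T by [].
  by apply/eqP; rewrite eq_sym eqEcard TS -subn_eq0 -leqn0.
have [<-|TneS] := eqVneq T S; first by [].
have [u [v [uT vS vNT euv]]] := connected_in_grow connS TS T0 TneS.
apply: (IH (v |: T)).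
- by move: sizeT; rewrite cardsU1 vNT; lia.
- by rewrite subUset sub1set vS.
- by apply/set0Pn; exists v; rewrite setU11.
- exact: connected_in_setU1 esym connT uT euv.
- exact: adj_vsum_leaf connT uT vNT euv adjT.
Qed.

End Embedding.

Theorem corollary3p2 (n : nat) (e : rel 'I_n) (d : 'I_n -> int)
  (phi : 'I_n -> vecZ n) (S : {set 'I_n}) :
  (0 < n)%N ->
  is_tree e -> minimal d -> symplectic_embedding e d phi ->
  spans_connected_subtree e S ->
  exists (a : 'I_n) (J : {set 'I_n}),
    a \notin J /\
    let w : vecZ n := fun i => \sum_(v in S) phi v i in
    ((forall i, w i = Evec a i - \sum_(j in J) Evec j i) \/
     (forall i, w i = - 2 * Evec a i - \sum_(j in J) Evec j i)).
Proof.
move=> _ tree _ emb [S0 connS].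
exact: adj_eq2 (adj_vsum_connected tree emb connS S0).
Qed.
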